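(* In the search algorithm described in the context (with non-negative edge costs and a consistent heuristic), let $l$ be a label at the moment it is extracted from OPEN, and let $l'\in\alpha(v(l))$ be any label in the current frontier set at $v(l)$. Then $\vec g(l')\le\vec g(l)$ if and only if $p(\vec g(l'))\le p(\vec g(l))$.
   Context: $p:\mathbb{R}^M\to\mathbb{R}^{M-1}$ is the projection removing the first component of a vector. Graph $G=(V,E,\vec c)$ is directed, with $\vec c(e)\in(\mathbb{R}^+)^M$ for every edge. Start vertex $v_o$, destination $v_d$. A heuristic $\vec h:V\to(\mathbb{R}^+)^M$ is consistent if $\vec h(v)\le\vec h(u)+\vec c(u,v)$ componentwise for every edge $(u,v)$, and $\vec h(v_d)=\vec 0$. A label is a pair $l=(v(l),\vec g(l))$ with $v(l)\in V$, $\vec g(l)\in(\mathbb{R}^+)^M$; $\vec f(l)=\vec g(l)+\vec h(v(l))$. For $a,b$ vectors, $a\le b$ means componentwise $\le$; $a$ dominates $b$ iff $a\le b$ and $a\ne b$. OPEN is a priority queue of labels ordered by lexicographic order of $\vec f$. Each vertex $v$ has a frontier set $\alpha(v)$ of labels at $v$. Algorithm: initialize OPEN $=\{(v_o,\vec 0)\}$, $\alpha(v)=\emptyset$ for all $v$. While OPEN is nonempty: extract from OPEN a label $l$ with lexicographically minimal $\vec f(l)$. If FrontierCheck($l$) (there is $l'\in\alpha(v(l))$ with $\vec g(l')\le\vec g(l)$) or SolutionCheck($l$) (there is $l^*\in\alpha(v_d)$ with $\vec g(l^* )\le\vec f(l)$) holds, discard $l$ and continue. Otherwise UpdateFrontier($l$):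 remove from $\alpha(v(l))$ all labels whose $\vec g$ is dominated by $\vec g(l)$, then add $l$ to $\alpha(v(l))$. If $v(l)=v_d$, continue. Otherwise expand $l$: for each edge $(v(l),v')\in E$, form $l'=(v',\vec g(l)+\vec c(v(l),v'))$; if FrontierCheck($l'$) or SolutionCheck($l'$) holds discard $l'$, else insert $l'$ into OPEN. On termination return $\alpha(v_d)$. *)

From mathcomp Require Import all_boot all_order all_algebra.
Set Implicit Arguments. Unset Strict Implicit. Unset Printing Implicit Defensive.
Import Order.TTheory GRing.Theory Num.Theory.
Local Open Scope ring_scope.

Section Search.
Variable R : realFieldType.

Definition vec (n : nat) := {ffun 'I_n -> R}.

Definition vadd n (a b : vec n) : vec n := [ffun i => a i + b i].
Definition vle n (a b : vec n) : bool := [forall i, a i <= b i].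
Definition vdom n (a b : vec n) : bool := vle a b && (a != b).
Definition lexle n (a b : vec n) : Prop :=
  (forall i, a i = b i) \/
  exists i : 'I_n, (forall j : 'I_n, (j < i)%N -> a j = b j) /\ a i < b i.
Definition proj1v M (a : vec M.+1) : vec M := [ffun i => a (lift ord0 i)].

Variables (V : finType) (M : nat).
(* number of objectives is M.+1 *)
Definition cvec := vec M.+1.
Variables (E : rel V) (c : V -> V -> cvec) (h : V -> cvec) (vo vd : V).

Definition label := (V * cvec)%type.
Definition lv (l : label) : V := l.1.
Definition lg (l : label) : cvec := l.2.
Definition lf (l : label) : cvec := vadd (lg l) (h (lv l)).

Record state := State { open : seq label; alpha : V -> seq label }.

Definition frontier_check (al : V -> seq label) (l : label) : bool :=
  has (fun l' => vle (lg l') (lg l)) (al (lv l)).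
Definition solution_check (al : V -> seq label) (l : label) : bool :=
  has (fun ls => vle (lg ls) (lf l)) (al vd).
Definition pruned al l := frontier_check al l || solution_check al l.

Definition update_frontier (al : V -> seq label) (l : label) : V -> seq label :=
  fun w => if w == lv l then
             rcons [seq l'' <- al w | ~~ vdom (lg l) (lg l'')] l
           else al w.

Definition children (l : label) : seq label :=
  [seq (v', vadd (lg l) (c (lv l) v')) | v' <- enum V & E (lv l) v'].

Definition lexmin_in (op : seq label) (l : label) : Prop :=
  l \in op /\ forall l2, l2 \in op -> lexle (lf l) (lf l2).

(* one iteration of the main loop: extract l = the element between o1 and o2 *)
Inductive step : state -> state -> Prop :=
| step_discard o1 o2 l al :
    lexmin_in (o1 ++ l :: o2) l -> pruned al l ->
    step (State (o1 ++ l :: o2) al) (State (o1 ++ o2) al)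
| step_goal o1 o2 l al :
    lexmin_in (o1 ++ l :: o2) l -> ~~ pruned al l -> lv l = vd ->
    step (State (o1 ++ l :: o2) al) (State (o1 ++ o2) (update_frontier al l))
| step_expand o1 o2 l al :
    lexmin_in (o1 ++ l :: o2) l -> ~~ pruned al l -> lv l != vd ->
    step (State (o1 ++ l :: o2) al)
         (State (o1 ++ o2 ++ [seq l' <- children l |
                               ~~ pruned (update_frontier al l) l'])
                (update_frontier al l)).

Definition init_state : state :=
  State [:: (vo, [ffun=> 0])] (fun _ => [::]).

Inductive reachable : state -> Prop :=
| reach_init : reachable init_state
| reach_step s s' : reachable s -> step s s' -> reachable s'.

End Search.

(* Along every run, each label stored in a frontier set alpha(w) sits at w
   and its first f-component is at most that of every label still in OPEN:
   OPEN is extracted in lexicographic (hence first-component) order, and a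
   consistent heuristic makes f1 non-decreasing from a label to its children.
   At extraction of l, a label l' of alpha(v(l)) thus has f1(l') <= f1(l);
   the heuristic terms cancel since v(l') = v(l), so g1(l') <= g1(l), and
   componentwise comparison of g reduces to comparison of the projections. *)
From mathcomp Require Import all_boot all_order all_algebra.
Import Order.TTheory GRing.Theory Num.Theory.
Local Open Scope ring_scope.
Set Implicit Arguments. Unset Strict Implicit. Unset Printing Implicit Defensive.

Lemma lexle_le0 (R : realFieldType) n (a b : vec R n.+1) :
  lexle a b -> a ord0 <= b ord0.
Proof.
case=> [-> // | [i [eq_before lt_i]]].
have [i0 | i_gt0] := posnP i; last by rewrite eq_before.
by rewrite (_ : ord0 = i) ?ltW //; apply: val_inj.
Qed.

Lemma vle_proj1v (R : realFieldType) M (a b : vec R M.+1) :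
  a ord0 <= b ord0 -> vle a b = vle (proj1v a) (proj1v b).
Proof.
move=> le0; apply/forallP/forallP => [le_ab i | le_proj i].
  by rewrite !ffunE.
have [j -> | -> //] := unliftP ord0 i.
by have := le_proj j; rewrite !ffunE.
Qed.

Section FrontierInvariant.
Variables (R : realFieldType) (V : finType) (M : nat).
Variables (E : rel V) (c : V -> V -> cvec R M) (h : V -> cvec R M) (vo vd : V).
Hypothesis h_consistent : forall u v, E u v -> vle (h u) (vadd (c u v) (h v)).

Definition frontier_below_open (s : state R V M) : Prop :=
  forall w x, x \in alpha s w ->
    lv x = w /\ forall y, y \in open s -> lf h x ord0 <= lf h y ord0.

Lemma mem_update_frontier al (l x : label R V M) w :
  x \in update_frontier al l w -> x \in al w \/ (x = l /\ w = lv l).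
Proof.
rewrite /update_frontier; case: eqP => [-> | _]; last by left.
by rewrite mem_rcons in_cons mem_filter => /orP[/eqP -> | /andP[_ ->]]; [right | left].
Qed.

Lemma children_f0_ge (l y : label R V M) :
  y \in children E c l -> lf h l ord0 <= lf h y ord0.
Proof.
case/mapP=> v; rewrite mem_filter => /andP[Ev _] ->.
have /forallP/(_ ord0) := h_consistent Ev.
by rewrite /lf /vadd /lv /lg /= !ffunE -addrA lerD2l.
Qed.

Lemma frontier_below_open_extract (s s' : state R V M) (l : label R V M) :
  frontier_below_open s -> lexmin_in h (open s) l ->
  (forall y, y \in open s' -> y \in open s \/ lf h l ord0 <= lf h y ord0) ->
  (forall w x, x \in alpha s' w -> x \in alpha s w \/ (x = l /\ w = lv l)) ->
  frontier_below_open s'.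
Proof.
move=> inv [l_open l_min] open_new alpha_new w x /alpha_new[x_old | [-> ->]].
  have [x_at x_below] := inv w x x_old; split=> // y /open_new[/x_below // | ge_l].
  exact: le_trans (x_below l l_open) ge_l.
split=> // y /open_new[y_old | //].
exact/lexle_le0/l_min.
Qed.

Lemma mem_extract_open (o1 o2 : seq (label R V M)) l y :
  y \in o1 ++ o2 -> y \in o1 ++ l :: o2.
Proof. by rewrite !mem_cat in_cons => /orP[] ->; rewrite ?orbT. Qed.

Lemma frontier_below_open_step s s' :
  step E c h vd s s' -> frontier_below_open s -> frontier_below_open s'.
Proof.
case=> [o1 o2 l al lmin _ | o1 o2 l al lmin _ _ | o1 o2 l al lmin _ _] inv;
  apply: (frontier_below_open_extract inv lmin); rewrite /=.
- by move=> y /(mem_extract_open l); left.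
- by left.
- by move=> y /(mem_extract_open l); left.
- by move=> w x /mem_update_frontier.
- move=> y; rewrite catA mem_cat mem_filter => /orP[/(mem_extract_open l) | /andP[_]].
    by left.
  by right; apply: children_f0_ge.
- by move=> w x /mem_update_frontier.
Qed.

Lemma frontier_below_open_reachable s :
  reachable E c h vo vd s -> frontier_below_open s.
Proof.
elim=> [w x // | s0 s1 _ inv st].
exact: frontier_below_open_step st inv.
Qed.

End FrontierInvariant.

Theorem corollary2 (R : realFieldType) (V : finType) (M : nat)
  (E : rel V) (c : V -> V -> cvec R M) (h : V -> cvec R M) (vo vd : V)
  (c_nonneg : forall u v, E u v -> forall i, 0 <= c u v i)
  (h_nonneg : forall v i, 0 <= h v i)
  (h_consistent : forall u v, E u v -> vle (h u) (vadd (c u v) (h v)))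
  (h_goal : h vd = [ffun=> 0])
  (s : state R V M)
  (Hreach : reachable E c h vo vd s)
  (l : label R V M)
  (Hext : lexmin_in h (open s) l)
  (l' : label R V M)
  (Hl' : l' \in alpha s (lv l)) :
  vle (lg l') (lg l) <-> vle (proj1v (lg l')) (proj1v (lg l)).
Proof.
have [l'_at l'_below] := frontier_below_open_reachable h_consistent Hreach Hl'.
have := l'_below l (proj1 Hext); rewrite /lf /vadd !ffunE l'_at lerD2r => le_g1.
by rewrite (vle_proj1v le_g1).
Qed.
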